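(* Let $(G,X,\Gamma)$ be a $(\mu,\nu)$-path system group, let $\eta\ge0$, and assume $G$ contains an $\eta$-quasi-convex element $(g,A)$. There exists $\theta=\theta(\eta,g,A)\ge1$ such that for every $\eta$-quasi-convex subgroup $(H,Y)$ of $G$: (I) for every $u\in G$, if $\operatorname{diam}(uA\cap Y)>\theta$ then $uA\subseteq Y^{+\theta}$; (II) for every subgroup $K$ with $H\le K\le G$, if $[K:H]>\theta$ then there exists $k\in K$ with $\operatorname{diam}(kA\cap Y)\le\theta$.
   Context: A path is a rectifiable continuous map $\alpha\colon[a,b]\to X$ parametrised by arc length; it is a $(\kappa,\lambda)$-quasi-geodesic if $d(\alpha(t),\alpha(t'))\le|t-t'|\le\kappa d(\alpha(t),\alpha(t'))+\lambda$. A $(\mu,\nu)$-path system on a geodesic metric space $X$ is a collection $\Gamma$ of paths closed under subpaths, such that any two points are joined by an element of $\Gamma$ and every element is a $(\mu,\nu)$-quasi-geodesic. A $(\mu,\nu)$-path system group $(G,X,\Gamma)$ is a group $G$ acting properly by isometries on a geodesic metric space $X$ (balls $B_G(x,r)=\{g: d(x,gx)\le r\}$ finite) with $\Gamma$ a $G$-invariant $(\mu,\nu)$-path system. $Y^{+\eta}=\{x: d(x,Y)\le\eta\}$. A subset $Y$ is $\eta$-quasi-convex if every $\gamma\in\Gamma$ with endpoints in $Y$ lies in $Y^{+\eta}$. A subgroup $H$ is $\eta$-quasi-convex, written $(H,Y)$, if $Y\subseteq X$ is an $H$-invariant $\eta$-quasi-convex subset on which $H$ acts $\eta$-coboundedly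 (for all $y,y'\in Y$ some $h\in H$ has $d(y,hy')\le\eta$). An element $g\in G$ is $\eta$-quasi-convex, written $(g,A)$, if $g$ has infinite order and $(\langle g\rangle,A)$ is an $\eta$-quasi-convex subgroup. The diameter of the empty set is $0$. *)

From Stdlib Require Import Reals List ZArith.
From Coquelicot Require Import Coquelicot.
Open Scope R_scope.

Record MetricSpace := {
  pt :> Type;
  dist : pt -> pt -> R;
  dist_nonneg : forall x y, 0 <= dist x y;
  dist_eq0 : forall x y, dist x y = 0 <-> x = y;
  dist_sym : forall x y, dist x y = dist y x;
  dist_tri : forall x y z, dist x z <= dist x y + dist y z
}.

Definition geodesic_space (X : MetricSpace) : Prop :=
  forall x y : X, exists c : R -> X,
    c 0 = x /\ c (dist X x y) = y /\
    forall s t, 0 <= s <= dist X x y -> 0 <= t <= dist X x y ->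
      dist X (c s) (c t) = Rabs (s - t).

Definition dist_set (X : MetricSpace) (x : X) (Y : X -> Prop) : Rbar :=
  Glb_Rbar (fun r => exists y, Y y /\ r = dist X x y).
Definition nbhd (X : MetricSpace) (Y : X -> Prop) (eta : R) : X -> Prop :=
  fun x => Rbar_le (dist_set X x Y) (Finite eta).

Definition diam (X : MetricSpace) (S : X -> Prop) : Rbar :=
  (* 0 is adjoined to the set of distances: harmless since distances are >= 0,
     and it gives diam(empty) = 0 *)
  Lub_Rbar (fun r => r = 0 \/ exists x y, S x /\ S y /\ r = dist X x y).

(* a path is a map alpha : [a,b] -> X, represented by (a, b, alpha : R -> X);
   values of alpha outside [a,b] are irrelevant. *)
Record path (X : MetricSpace) := mkPath {
  p_a : R; p_b : R; p_f : R -> X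
}.
Arguments mkPath {X}.
Arguments p_a {X}.
Arguments p_b {X}.
Arguments p_f {X}.

Fixpoint incr_from (x0 : R) (l : list R) : Prop :=
  match l with nil => True | y :: l' => x0 <= y /\ incr_from y l' end.

Fixpoint chain_len (X : MetricSpace) (f : R -> X) (x0 : R) (l : list R) : R :=
  match l with
  | nil => 0
  | y :: l' => dist X (f x0) (f y) + chain_len X f y l'
  end.

Definition curve_length (X : MetricSpace) (f : R -> X) (s t : R) : Rbar :=
  Lub_Rbar (fun r => exists l, incr_from s l /\ last l s = t /\ r = chain_len X f s l).

Definition is_path (X : MetricSpace) (p : path X) : Prop :=
  p_a p <= p_b p /\
  (forall t, p_a p <= t <= p_b p -> forall eps, 0 < eps -> exists delta, 0 < delta /\
     forall t', p_a p <= t' <= p_b p -> Rabs (t' - t) < delta ->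
       dist X (p_f p t) (p_f p t') < eps) /\
  (forall s t, p_a p <= s -> s <= t -> t <= p_b p ->
     curve_length X (p_f p) s t = Finite (t - s)).

Definition quasi_geodesic (X : MetricSpace) (kappa lambda : R) (p : path X) : Prop :=
  is_path X p /\
  forall t t', p_a p <= t <= p_b p -> p_a p <= t' <= p_b p ->
    dist X (p_f p t) (p_f p t') <= Rabs (t - t') /\
    Rabs (t - t') <= kappa * dist X (p_f p t) (p_f p t') + lambda.

Definition path_system (X : MetricSpace) (mu nu : R) (Gam : path X -> Prop) : Prop :=
  (forall p, Gam p -> is_path X p) /\
  (forall p a' b', Gam p -> p_a p <= a' -> a' <= b' -> b' <= p_b p ->
     Gam (mkPath a' b' (p_f p))) /\
  (forall x y : X, exists p, Gam p /\ p_f p (p_a p) = x /\ p_f p (p_b p) = y) /\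
  (forall p, Gam p -> quasi_geodesic X mu nu p).

Record Group := {
  gcar :> Type;
  gmul : gcar -> gcar -> gcar;
  ginv : gcar -> gcar;
  gone : gcar;
  gmulA : forall x y z, gmul x (gmul y z) = gmul (gmul x y) z;
  gmul1l : forall x, gmul gone x = x;
  gmul1r : forall x, gmul x gone = x;
  gmulVl : forall x, gmul (ginv x) x = gone;
  gmulVr : forall x, gmul x (ginv x) = gone
}.

Fixpoint gpow (G : Group) (g : G) (n : nat) : G :=
  match n with O => gone G | S n' => gmul G g (gpow G g n') end.

Definition zpow (G : Group) (g : G) (z : Z) : G :=
  match z with
  | Z0 => gone G
  | Zpos p => gpow G g (Pos.to_nat p)
  | Zneg p => ginv G (gpow G g (Pos.to_nat p))
  end.

Definition is_subgroup (G : Group) (H : G -> Prop) : Prop :=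
  H (gone G) /\ (forall x y, H x -> H y -> H (gmul G x y)) /\
  (forall x, H x -> H (ginv G x)).

Definition cyclic_subgroup (G : Group) (g : G) : G -> Prop :=
  fun h => exists z : Z, h = zpow G g z.

Definition infinite_order (G : Group) (g : G) : Prop :=
  forall n : nat, (0 < n)%nat -> gpow G g n <> gone G.

(* [K:H] > theta (H <= K): there are more than theta pairwise distinct
   cosets kH, k in K (this includes the case of infinite index). *)
Definition index_gt (G : Group) (K H : G -> Prop) (theta : R) : Prop :=
  exists l : list G, (forall k, In k l -> K k) /\
    INR (length l) > theta /\
    forall i j, (i < length l)%nat -> (j < length l)%nat -> i <> j ->
      ~ H (gmul G (ginv G (nth i l (gone G))) (nth j l (gone G))).

Definition isometric_action (G : Group) (X : MetricSpace) (act : G -> X -> X) : Prop :=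
  (forall x, act (gone G) x = x) /\
  (forall g h x, act (gmul G g h) x = act g (act h x)) /\
  (forall g x y, dist X (act g x) (act g y) = dist X x y).

Definition proper_action (G : Group) (X : MetricSpace) (act : G -> X -> X) : Prop :=
  forall (x : X) (r : R), exists l : list G,
    forall g, dist X x (act g x) <= r -> In g l.

Definition act_path (G : Group) (X : MetricSpace) (act : G -> X -> X) (g : G)
  (p : path X) : path X :=
  mkPath (p_a p) (p_b p) (fun t => act g (p_f p t)).

Definition path_system_group (G : Group) (X : MetricSpace) (act : G -> X -> X)
  (Gam : path X -> Prop) (mu nu : R) : Prop :=
  geodesic_space X /\ isometric_action G X act /\ proper_action G X act /\
  path_system X mu nu Gam /\
  (forall g p, Gam p -> Gam (act_path G X act g p)).

Definition qc_subset (X : MetricSpace) (Gam : path X -> Prop) (eta : R)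
  (Y : X -> Prop) : Prop :=
  forall p, Gam p -> Y (p_f p (p_a p)) -> Y (p_f p (p_b p)) ->
    forall t, p_a p <= t <= p_b p -> nbhd X Y eta (p_f p t).

Definition qc_subgroup (G : Group) (X : MetricSpace) (act : G -> X -> X)
  (Gam : path X -> Prop) (eta : R) (H : G -> Prop) (Y : X -> Prop) : Prop :=
  is_subgroup G H /\
  (forall h y, H h -> Y y -> Y (act h y)) /\
  qc_subset X Gam eta Y /\
  (forall y y', Y y -> Y y' -> exists h, H h /\ dist X y (act h y') <= eta).

Definition qc_element (G : Group) (X : MetricSpace) (act : G -> X -> X)
  (Gam : path X -> Prop) (eta : R) (g : G) (A : X -> Prop) : Prop :=
  infinite_order G g /\ qc_subgroup G X act Gam eta (cyclic_subgroup G g) A.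

Definition translate (G : Group) (X : MetricSpace) (act : G -> X -> X) (u : G)
  (A : X -> Prop) : X -> Prop := fun x => exists a, A a /\ x = act u a.
Definition inter (X : MetricSpace) (A B : X -> Prop) : X -> Prop :=
  fun x => A x /\ B x.

(* Fix a0 in A.  Since A is coarsely the orbit <g>a0 and the action is proper, a bounded
   jump between orbit points has a bounded exponent.  If uA meets Y in two far-apart points,
   a path of the system between them stays close to uA and to Y, so a long window of
   consecutive orbit points u g^q a0 lies near Y.  By coboundedness of H on Y each of them is
   moved onto the first by an element of H up to a bounded error; as only finitely many group
   elements move a0 that little, two of these corrections coincide, which yields an element
   of H translating the orbit u<g>a0 by a positive period shorter than the window.  Hence the
   whole orbit, and so all of uA, is near Y.  For (II), if every translate kA with k in K met
   Y in a large set, the K-orbit of a0 would stay near Y, and the same counting bounds the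
   number of cosets of H in K. *)

From Stdlib Require Import Reals List ZArith Lia Lra Classical IndefiniteDescription.
From Coquelicot Require Import Coquelicot.
Open Scope R_scope.

Section GroupTheory.
Variable G : Group.

Lemma gmul_cancel_l (x y z : G) : gmul G z x = gmul G z y -> x = y.
Proof.
  intro E.
  rewrite <- (gmul1l G x), <- (gmul1l G y), <- (gmulVl G z), <- !gmulA, E.
  reflexivity.
Qed.

Lemma gmul_cancel_r (x y z : G) : gmul G x z = gmul G y z -> x = y.
Proof.
  intro E.
  rewrite <- (gmul1r G x), <- (gmul1r G y), <- (gmulVr G z), !gmulA, E.
  reflexivity.
Qed.

Lemma ginv_unique (x y : G) : gmul G x y = gone G -> y = ginv G x.
Proof. intro E. apply (gmul_cancel_l _ _ x). rewrite E, gmulVr. reflexivity. Qed.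

Lemma ginvK (x : G) : ginv G (ginv G x) = x.
Proof. symmetry. apply ginv_unique, gmulVl. Qed.

Lemma ginv_mul (x y : G) : ginv G (gmul G x y) = gmul G (ginv G y) (ginv G x).
Proof.
  symmetry. apply ginv_unique.
  rewrite gmulA, <- (gmulA G x y), gmulVr, gmul1r, gmulVr. reflexivity.
Qed.

Lemma gmul_ginv_swap (a b c d : G) :
  gmul G (ginv G a) b = gmul G (ginv G c) d ->
  gmul G d (ginv G b) = gmul G c (ginv G a).
Proof.
  intro E.
  assert (Ed : d = gmul G c (gmul G (ginv G a) b))
    by (rewrite E, gmulA, gmulVr, gmul1l; reflexivity).
  rewrite Ed, <- !gmulA, gmulVr, gmul1r. reflexivity.
Qed.

Variable g : G.

Lemma gpow_comm n : gmul G g (gpow G g n) = gmul G (gpow G g n) g.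
Proof.
  induction n as [|n IHn]; simpl.
  - rewrite gmul1l, gmul1r. reflexivity.
  - rewrite IHn at 1. apply gmulA.
Qed.

Lemma zpow_succ_r z : zpow G g (z + 1) = gmul G (zpow G g z) g.
Proof.
  destruct z as [|p|p]; simpl.
  - rewrite gmul1l, gmul1r. reflexivity.
  - rewrite Pos2Nat.inj_add, Nat.add_1_r. apply gpow_comm.
  - destruct (Pos.eq_dec p 1) as [->|Hp]; simpl.
    + rewrite gmul1r, gmulVl. reflexivity.
    + replace (Z.pos_sub 1 p) with (Z.neg (p - 1)) by (rewrite Z.pos_sub_lt; lia).
      replace (Pos.to_nat p) with (S (Pos.to_nat (p - 1))) by lia. simpl.
      rewrite ginv_mul, <- gmulA, gmulVl, gmul1r. reflexivity.
Qed.

Lemma zpow_pred_r z : zpow G g (z - 1) = gmul G (zpow G g z) (ginv G g).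
Proof.
  replace z with ((z - 1) + 1)%Z at 2 by lia.
  rewrite zpow_succ_r, <- gmulA, gmulVr, gmul1r. reflexivity.
Qed.

Lemma zpow_add i j : zpow G g (i + j) = gmul G (zpow G g i) (zpow G g j).
Proof.
  induction j as [|j IHj|j IHj] using Z.peano_ind.
  - rewrite Z.add_0_r. symmetry. apply gmul1r.
  - rewrite <- Z.add_1_r, Z.add_assoc, !zpow_succ_r, IHj, gmulA. reflexivity.
  - rewrite <- Z.sub_1_r, Z.add_sub_assoc, !zpow_pred_r, IHj, gmulA. reflexivity.
Qed.

Lemma zpow_opp z : zpow G g (- z) = ginv G (zpow G g z).
Proof.
  apply ginv_unique. rewrite <- zpow_add, Z.add_opp_diag_r. reflexivity.
Qed.

Lemma zpow_inj : infinite_order G g ->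
  forall i j, zpow G g i = zpow G g j -> i = j.
Proof.
  intros Hinf i j E.
  assert (E0 : zpow G g (i - j) = gone G)
    by (rewrite <- Z.add_opp_r, zpow_add, zpow_opp, E, gmulVr; reflexivity).
  destruct (i - j)%Z as [|p|p] eqn:Hij; [lia | exfalso | exfalso];
    apply (Hinf (Pos.to_nat p) (Pos2Nat.is_pos p)); simpl in E0.
  - exact E0.
  - rewrite <- (ginvK (gpow G g _)), E0. symmetry. apply ginv_unique, gmul1l.
Qed.

End GroupTheory.

Section IsometricAction.
Variables (G : Group) (X : MetricSpace) (act : G -> X -> X).
Hypothesis IA : isometric_action G X act.

Lemma act_one x : act (gone G) x = x.
Proof. apply IA. Qed.

Lemma act_mul u v x : act (gmul G u v) x = act u (act v x).
Proof. apply IA. Qed.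

Lemma act_dist u x y : dist X (act u x) (act u y) = dist X x y.
Proof. apply IA. Qed.

Lemma act_inv_l u x : act (ginv G u) (act u x) = x.
Proof. rewrite <- act_mul, gmulVl. apply act_one. Qed.

Lemma act_inv_r u x : act u (act (ginv G u) x) = x.
Proof. rewrite <- act_mul, gmulVr. apply act_one. Qed.

Lemma act_zpow_add (g : G) i j x :
  act (zpow G g i) (act (zpow G g j) x) = act (zpow G g (i + j)) x.
Proof. rewrite zpow_add. symmetry. apply act_mul. Qed.

Lemma dist_zpow_le (g : G) a0 k :
  dist X a0 (act (zpow G g k) a0) <= IZR (Z.abs k) * dist X a0 (act g a0).
Proof.
  set (D := dist X a0 (act g a0)).
  assert (Hnat : forall n : nat, dist X a0 (act (zpow G g (Z.of_nat n)) a0) <= INR n * D).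
  { induction n as [|n IHn].
    - simpl. rewrite act_one, (proj2 (dist_eq0 X a0 a0) eq_refl). lra.
    - rewrite Nat2Z.inj_succ, <- Z.add_1_r, zpow_succ_r, act_mul, S_INR.
      eapply Rle_trans; [apply (dist_tri X _ (act (zpow G g (Z.of_nat n)) a0)) |].
      rewrite act_dist. fold D. lra. }
  destruct (Z.le_gt_cases 0 k).
  - rewrite <- (Z2Nat.id k), Z.abs_eq, <- INR_IZR_INZ by lia. apply Hnat.
  - rewrite <- (Z.opp_involutive k), <- (Z2Nat.id (- k)), zpow_opp, Z.abs_opp,
      Z.abs_eq, <- INR_IZR_INZ by lia.
    rewrite <- (act_dist (zpow G g (Z.of_nat (Z.to_nat (- k))))), act_inv_r, dist_sym.
    apply Hnat.
Qed.

Lemma dist_translate_zpow (g : G) a0 u i j :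
  dist X (act u (act (zpow G g i) a0)) (act u (act (zpow G g j) a0))
  = dist X a0 (act (zpow G g (j - i)) a0).
Proof.
  rewrite act_dist. replace j with (i + (j - i))%Z at 1 by lia.
  rewrite <- act_zpow_add. apply act_dist.
Qed.

End IsometricAction.

Lemma zpow_displacement_bounded (G : Group) (X : MetricSpace) (act : G -> X -> X) (g : G) :
  proper_action G X act -> infinite_order G g ->
  forall a0 r, exists M : Z, (0 <= M)%Z /\
    forall k, dist X a0 (act (zpow G g k) a0) <= r -> (Z.abs k <= M)%Z.
Proof.
  intros PA Hinf a0 r. destruct (PA a0 r) as [L HL].
  assert (Hlog : forall h : G, exists k, (exists k', h = zpow G g k') -> h = zpow G g k).
  { intro h. destruct (classic (exists k', h = zpow G g k')) as [[k' E] | Hno].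
    - exists k'. auto.
    - exists 0%Z. intro E. contradiction. }
  destruct (functional_choice _ Hlog) as [expo Hexpo].
  set (M := list_max (map (fun h => Z.abs_nat (expo h)) L)).
  exists (Z.of_nat M). split; [lia |]. intros k Hk.
  assert (Ek : expo (zpow G g k) = k).
  { apply (zpow_inj G g Hinf). symmetry. apply Hexpo. eauto. }
  assert (Hle : List.Forall (fun n => (n <= M)%nat) (map (fun h => Z.abs_nat (expo h)) L))
    by (apply list_max_le; reflexivity).
  rewrite List.Forall_forall in Hle.
  specialize (Hle (Z.abs_nat k)). rewrite <- Ek in Hle at 1.
  assert (Z.abs_nat k <= M)%nat by (apply Hle, (in_map (fun h => Z.abs_nat (expo h))), HL, Hk). lia.
Qed.

Section NearSets.
Variable X : MetricSpace.

Definition near (Y : X -> Prop) (e : R) (x : X) : Prop :=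
  exists y, Y y /\ dist X x y <= e.

Lemma near_nbhd Y e x : near Y e x -> nbhd X Y e x.
Proof.
  intros [y [Hy Hd]].
  eapply Rbar_le_trans; [apply (proj1 (Glb_Rbar_correct _)); exists y; split; eauto | exact Hd].
Qed.

(* The infimum defining [nbhd] need not be attained: the slack 1 buys a witness. *)
Lemma nbhd_near Y e x : nbhd X Y e x -> near Y (e + 1) x.
Proof.
  intro Hn. apply NNPP. intro Hno.
  assert (Hlb : is_lb_Rbar (fun r => exists y, Y y /\ r = dist X x y) (Finite (e + 1))).
  { intros r [y [Hy ->]]. simpl. apply Rnot_lt_le. intro Hlt.
    apply Hno. exists y. split; [exact Hy | lra]. }
  pose proof (Rbar_le_trans _ _ _ (proj2 (Glb_Rbar_correct _) _ Hlb) Hn). simpl in *. lra.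
Qed.

Lemma near_mono Y e e' x : e <= e' -> near Y e x -> near Y e' x.
Proof. intros h [y [Hy Hd]]. exists y. split; [exact Hy | lra]. Qed.

Lemma near_move Y d e x x' : dist X x x' <= d -> near Y e x' -> near Y (d + e) x.
Proof.
  intros Hxx' [y [Hy Hd]]. exists y. split; [exact Hy |].
  pose proof (dist_tri X x x' y). lra.
Qed.

Lemma diam_gt S th : 0 <= th -> Rbar_lt (Finite th) (diam X S) ->
  exists x y, S x /\ S y /\ th < dist X x y.
Proof.
  intros Hth Hlt. apply NNPP. intro Hno.
  apply (Rbar_lt_not_le _ _ Hlt), (proj2 (Lub_Rbar_correct _)).
  intros r [-> | [x [y [Hx [Hy ->]]]]]; simpl; [exact Hth |].
  apply Rnot_lt_le. intro Hxy. apply Hno. eauto.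
Qed.

Lemma diam_le_of_empty S r : 0 <= r -> (forall x, ~ S x) -> Rbar_le (diam X S) (Finite r).
Proof.
  intros Hr HS. apply (proj2 (Lub_Rbar_correct _)).
  intros q [-> | [x [_ [Hx _]]]]; [exact Hr | destruct (HS x Hx)].
Qed.

End NearSets.

Arguments near {X}.

Lemma pigeonhole {T : Type} (f : nat -> T) (L : list T) n :
  (forall i, (i < n)%nat -> In (f i) L) -> (length L < n)%nat ->
  exists i j, (i < j < n)%nat /\ f i = f j.
Proof.
  intros Hin Hlen. apply NNPP. intro Hno.
  assert (ND : NoDup (map f (seq 0 n))).
  { apply NoDup_map_NoDup_ForallPairs; [| apply seq_NoDup].
    intros a b Ha Hb E. apply in_seq in Ha, Hb.
    destruct (Nat.lt_trichotomy a b) as [h|[h|h]]; [exfalso | exact h | exfalso];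
      apply Hno; [exists a, b | exists b, a]; split; auto; lia. }
  assert (Inc : incl (map f (seq 0 n)) L).
  { intros x Hx. apply in_map_iff in Hx. destruct Hx as [i [<- Hi]].
    apply in_seq in Hi. apply Hin. lia. }
  pose proof (NoDup_incl_length ND Inc). rewrite length_map, length_seq in *. lia.
Qed.

Lemma discrete_ivt (f : nat -> Z) (M : Z) K : (0 <= M)%Z ->
  (forall i, (Z.abs (f (S i) - f i) <= M)%Z) ->
  forall j, (Z.min (f O) (f K) <= j <= Z.max (f O) (f K))%Z ->
  exists i, (Z.abs (f i - j) <= M)%Z.
Proof.
  intros HM Hs j. induction K as [|K IHK]; intro Hj.
  - exists O. lia.
  - destruct (classic (Z.min (f O) (f K) <= j <= Z.max (f O) (f K))%Z) as [Hc|Hc].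
    + exact (IHK Hc).
    + exists (S K). specialize (Hs K). lia.
Qed.

Lemma periodic_extension (P : Z -> Prop) (p m : Z) : (0 < p)%Z ->
  (forall q, P q <-> P (q + p)%Z) ->
  (forall r, (0 <= r < p)%Z -> P (m + r)%Z) -> forall q, P q.
Proof.
  intros Hp Hper Hwin q.
  assert (Hd : forall d, P (m + (q - m) mod p + d * p)%Z).
  { induction d as [|d IHd|d IHd] using Z.peano_ind.
    - rewrite Z.mul_0_l, Z.add_0_r. apply Hwin, Z.mod_pos_bound, Hp.
    - rewrite Z.mul_succ_l, Z.add_assoc. apply (proj1 (Hper _)), IHd.
    - apply (proj2 (Hper _)). rewrite Z.mul_pred_l.
      replace (m + (q - m) mod p + (d * p - p) + p)%Z
        with (m + (q - m) mod p + d * p)%Z by lia.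
      exact IHd. }
  specialize (Hd ((q - m) / p)%Z).
  pose proof (Z.div_mod (q - m) p ltac:(lia)).
  replace q with (m + (q - m) mod p + (q - m) / p * p)%Z by lia.
  exact Hd.
Qed.

Lemma unit_partition (a b : R) : a <= b ->
  exists (K : nat) (t : nat -> R), t O = a /\ t K = b /\
    (forall i, a <= t i <= b) /\ (forall i, Rabs (t i - t (S i)) <= 1).
Proof.
  intro Hab. destruct (archimed (b - a)) as [Hup _].
  exists (Z.to_nat (up (b - a))), (fun i => Rmin (a + INR i) b).
  assert (HK : b - a <= INR (Z.to_nat (up (b - a)))).
  { rewrite INR_IZR_INZ, Z2Nat.id; [lra |]. apply le_IZR. lra. }
  repeat split; intros; try (pose proof (pos_INR i));
    rewrite ?S_INR; unfold Rmin; simpl;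
    repeat destruct Rle_dec; try apply Rabs_le; lra.
Qed.

Lemma qc_element_near_orbit (G : Group) (X : MetricSpace) (act : G -> X -> X)
  (Gam : path X -> Prop) (eta : R) (g : G) (A : X -> Prop) (a0 : X) :
  qc_element G X act Gam eta g A -> A a0 ->
  forall a, A a -> exists k, dist X a (act (zpow G g k) a0) <= eta.
Proof.
  intros [_ [_ [_ [_ HAcob]]]] HA0 a Ha.
  destruct (HAcob a a0 Ha HA0) as [h [[k ->] Hk]]. eauto.
Qed.

Section OrbitShadows.
Variables (G : Group) (X : MetricSpace) (act : G -> X -> X) (Gam : path X -> Prop)
  (mu nu eta : R) (g : G) (A Y : X -> Prop) (a0 : X).
Hypothesis PSG : path_system_group G X act Gam mu nu.
Hypothesis Heta : 0 <= eta.
Hypothesis HAqc : qc_subset X Gam eta A.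
Hypothesis HAorb : forall a, A a -> exists k, dist X a (act (zpow G g k) a0) <= eta.
Hypothesis HYqc : qc_subset X Gam eta Y.

Let IA : isometric_action G X act := proj1 (proj2 PSG).
Let orb (u : G) (k : Z) : X := act u (act (zpow G g k) a0).

Lemma path_near_translate_orbit u p : Gam p ->
  translate G X act u A (p_f p (p_a p)) -> translate G X act u A (p_f p (p_b p)) ->
  forall t, p_a p <= t <= p_b p -> exists k, dist X (p_f p t) (orb u k) <= 2 * eta + 1.
Proof.
  intros Hp [a [Ha Ea]] [b [Hb Eb]] t Ht.
  pose proof PSG as [_ [_ [_ [_ Hinv]]]].
  assert (Hnbhd : nbhd X A eta (act (ginv G u) (p_f p t))).
  { apply (HAqc (act_path G X act (ginv G u) p) (Hinv _ _ Hp)); simpl;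
      [rewrite Ea, act_inv_l | rewrite Eb, act_inv_l | ]; assumption. }
  destruct (nbhd_near _ _ _ _ Hnbhd) as [a' [Ha' Hd']].
  destruct (HAorb a' Ha') as [k Hk]. exists k. unfold orb.
  rewrite <- (act_inv_r G X act IA u (p_f p t)), act_dist by exact IA.
  pose proof (dist_tri X (act (ginv G u) (p_f p t)) a' (act (zpow G g k) a0)). lra.
Qed.

Lemma orbit_shadow u x x' :
  translate G X act u A x -> Y x -> translate G X act u A x' -> Y x' ->
  exists (K : nat) (kf : nat -> Z),
    dist X x (orb u (kf O)) <= 2 * eta + 1 /\
    dist X x' (orb u (kf K)) <= 2 * eta + 1 /\
    (forall i, dist X (orb u (kf i)) (orb u (kf (S i))) <= 2 * (2 * eta + 1) + 1) /\
    (forall i, near Y ((2 * eta + 1) + (eta + 1)) (orb u (kf i))).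
Proof.
  intros Tx Yx Tx' Yx'.
  pose proof PSG as [_ [_ [_ [[Hpath [_ [Hjoin Hqg]]] _]]]].
  destruct (Hjoin x x') as [p [Hp [Ex Ex']]].
  destruct (unit_partition (p_a p) (p_b p) (proj1 (Hpath p Hp)))
    as [K [t [Ht0 [HtK [Ht Hstep]]]]].
  assert (Hk : forall i, exists k, dist X (p_f p (t i)) (orb u k) <= 2 * eta + 1)
    by (intro i; apply path_near_translate_orbit; [exact Hp | rewrite Ex | rewrite Ex' | ]; auto).
  destruct (functional_choice _ Hk) as [kf Hkf].
  assert (HY : forall i, near Y (eta + 1) (p_f p (t i)))
    by (intro i; apply nbhd_near, HYqc; [exact Hp | rewrite Ex | rewrite Ex' | ]; auto).
  exists K, kf. repeat split.
  - rewrite <- Ex, <- Ht0. apply Hkf.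
  - rewrite <- Ex', <- HtK. apply Hkf.
  - intro i.
    assert (Hi : dist X (p_f p (t i)) (p_f p (t (S i))) <= 1).
    { eapply Rle_trans; [apply (Hqg p Hp); apply Ht | apply Hstep]. }
    pose proof (dist_tri X (orb u (kf i)) (p_f p (t i)) (orb u (kf (S i)))).
    pose proof (dist_tri X (p_f p (t i)) (p_f p (t (S i))) (orb u (kf (S i)))).
    pose proof (Hkf i). pose proof (Hkf (S i)). rewrite dist_sym in H1. lra.
  - intro i. apply (near_move _ _ _ _ _ (p_f p (t i))); [rewrite dist_sym; apply Hkf | apply HY].
Qed.

Variable M0 : Z.
Hypothesis HM0 : (0 <= M0)%Z.
Hypothesis HM0b : forall k,
  dist X a0 (act (zpow G g k) a0) <= 2 * (2 * eta + 1) + 1 -> (Z.abs k <= M0)%Z.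

Let D1 := dist X a0 (act g a0).
Let c := IZR M0 * D1 + ((2 * eta + 1) + (eta + 1)).

Lemma near_orbit_between u (K : nat) (kf : nat -> Z) :
  (forall i, dist X (orb u (kf i)) (orb u (kf (S i))) <= 2 * (2 * eta + 1) + 1) ->
  (forall i, near Y ((2 * eta + 1) + (eta + 1)) (orb u (kf i))) ->
  forall j, (Z.min (kf O) (kf K) <= j <= Z.max (kf O) (kf K))%Z -> near Y c (orb u j).
Proof.
  intros Hstep Hnear j Hj.
  assert (Hjump : forall i, (Z.abs (kf (S i) - kf i) <= M0)%Z).
  { intro i. apply HM0b. rewrite <- (dist_translate_zpow G X act IA g a0 u). apply Hstep. }
  destruct (discrete_ivt kf M0 K HM0 Hjump j Hj) as [i Hi].
  apply (near_move _ _ _ _ _ (orb u (kf i))); [| apply Hnear].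
  unfold orb. rewrite dist_translate_zpow by exact IA.
  eapply Rle_trans; [apply dist_zpow_le, IA |].
  apply Rmult_le_compat_r; [apply dist_nonneg | apply IZR_le; exact Hi].
Qed.

Lemma orbit_near_window u x x' (N : nat) :
  translate G X act u A x -> Y x -> translate G X act u A x' -> Y x' ->
  2 * (2 * eta + 1) + INR N * D1 < dist X x x' ->
  exists m, forall r : nat, (r <= N)%nat -> near Y c (orb u (m + Z.of_nat r)).
Proof.
  intros Tx Yx Tx' Yx' Hxx'.
  destruct (orbit_shadow u x x' Tx Yx Tx' Yx') as [K [kf [Hx [Hx' [Hstep Hnear]]]]].
  assert (Hlong : (Z.of_nat N < Z.abs (kf K - kf O))%Z).
  { apply lt_IZR. rewrite <- INR_IZR_INZ. apply Rnot_le_lt. intro Hshort.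
    pose proof (dist_tri X x (orb u (kf O)) x').
    pose proof (dist_tri X (orb u (kf O)) (orb u (kf K)) x') as Hmid.
    rewrite (dist_sym X (orb u (kf K)) x') in Hmid.
    pose proof (dist_zpow_le G X act IA g a0 (kf K - kf O)) as Hpow. fold D1 in Hpow.
    pose proof (Rmult_le_compat_r D1 _ _ (dist_nonneg X _ _) Hshort).
    unfold orb in *. rewrite dist_translate_zpow in Hmid by exact IA. lra. }
  exists (Z.min (kf O) (kf K)). intros r Hr.
  apply (near_orbit_between u K kf Hstep Hnear). lia.
Qed.

Variables (H : G -> Prop) (L : list G).
Hypothesis HS : is_subgroup G H.
Hypothesis HYinv : forall h y, H h -> Y y -> Y (act h y).
Hypothesis HYcob : forall y y', Y y -> Y y' -> exists h, H h /\ dist X y (act h y') <= eta.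
Hypothesis HL : forall h, dist X a0 (act h a0) <= 2 * c + eta -> In h L.

Lemma orbit_near_window_period u m :
  (forall r : nat, (r <= length L)%nat -> near Y c (orb u (m + Z.of_nat r))) ->
  exists (P : Z) (w : G), (0 < P <= Z.of_nat (length L))%Z /\ H w /\
    forall q, act w (orb u q) = orb u (q + P).
Proof.
  intros Hwin.
  assert (Hh : forall r : nat, exists h, (r <= length L)%nat -> H h /\
    dist X (orb u (m + Z.of_nat r)) (act h (orb u m)) <= 2 * c + eta).
  { intro r. destruct (le_lt_dec r (length L)) as [Hr | Hr].
    2:{ exists (gone G). lia. }
    destruct (Hwin r Hr) as [y [Hy Hdy]].
    destruct (Hwin O (Nat.le_0_l _)) as [y0 [Hy0 Hdy0]]. rewrite Z.add_0_r in Hdy0.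
    destruct (HYcob y y0 Hy Hy0) as [h [Hh Hdh]]. exists h. intros _. split; [exact Hh |].
    pose proof (dist_tri X (orb u (m + Z.of_nat r)) y (act h (orb u m))).
    pose proof (dist_tri X y (act h y0) (act h (orb u m))) as Hy0m.
    rewrite act_dist, (dist_sym X y0) in Hy0m by exact IA. lra. }
  destruct (functional_choice _ Hh) as [hf Hhf].
  set (V := fun r : nat => gmul G u (zpow G g (m + Z.of_nat r))).
  set (corr := fun r : nat => gmul G (gmul G (ginv G (V r)) (hf r)) (gmul G u (zpow G g m))).
  destruct (pigeonhole corr L (S (length L))) as [i [j [Hij Eij]]]; [| lia |].
  { intros r Hr. apply HL. unfold corr.
    rewrite <- (act_dist G X act IA (V r)), !act_mul, act_inv_r by exact IA.
    unfold V. rewrite act_mul by exact IA. apply Hhf. lia. }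
  apply gmul_cancel_r, gmul_ginv_swap in Eij.
  exists (Z.of_nat (j - i)), (gmul G (hf j) (ginv G (hf i))). repeat split; [lia | lia | |].
  - destruct HS as [_ [Hmul Hinv]]. apply Hmul; [| apply Hinv]; apply Hhf; lia.
  - intro q. rewrite Eij. unfold V, orb.
    rewrite ginv_mul, !act_mul, act_inv_l, <- zpow_opp, !act_zpow_add by exact IA.
    f_equal. f_equal. f_equal. lia.
Qed.

Lemma orbit_near_everywhere u m :
  (forall r : nat, (r <= length L)%nat -> near Y c (orb u (m + Z.of_nat r))) ->
  forall q, near Y c (orb u q).
Proof.
  intros Hwin.
  destruct (orbit_near_window_period u m Hwin) as [P [w [HP [Hw Hper]]]].
  apply (periodic_extension _ P m); [lia | |].
  - intro q. rewrite <- Hper. destruct HS as [_ [_ Hinv]]. split.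
    + intros [y [Hy Hd]]. exists (act w y). split; [apply HYinv; assumption |].
      rewrite act_dist by exact IA. exact Hd.
    + intros [y [Hy Hd]]. exists (act (ginv G w) y). split; [apply HYinv; auto |].
      rewrite <- (act_inv_l G X act IA w (orb u q)), act_dist by exact IA. exact Hd.
  - intros r Hr. rewrite <- (Z2Nat.id r) by lia. apply Hwin. lia.
Qed.

Lemma translate_near_of_large_intersection u :
  Rbar_lt (Finite (2 * (2 * eta + 1) + INR (length L) * D1))
    (diam X (inter X (translate G X act u A) Y)) ->
  forall x, translate G X act u A x -> near Y (eta + c) x.
Proof.
  intros Hdiam x [a [Ha ->]].
  assert (Hth : 0 <= 2 * (2 * eta + 1) + INR (length L) * D1)
    by (pose proof (Rmult_le_pos _ _ (pos_INR (length L)) (dist_nonneg X a0 (act g a0)));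
        unfold D1; lra).
  destruct (diam_gt _ _ _ Hth Hdiam) as [x1 [x2 [[T1 Y1] [[T2 Y2] Hd]]]].
  destruct (orbit_near_window u x1 x2 (length L) T1 Y1 T2 Y2 Hd) as [m Hwin].
  destruct (HAorb a Ha) as [k Hk].
  apply (near_move _ _ _ _ _ (orb u k)); [| apply (orbit_near_everywhere u m Hwin)].
  unfold orb. rewrite act_dist by exact IA. exact Hk.
Qed.

End OrbitShadows.

Section FiniteIndex.
Variables (G : Group) (X : MetricSpace) (act : G -> X -> X) (H : G -> Prop)
  (Y : X -> Prop) (eta e : R) (x0 : X) (L : list G).
Hypothesis IA : isometric_action G X act.
Hypothesis HS : is_subgroup G H.
Hypothesis HYcob : forall y y', Y y -> Y y' -> exists h, H h /\ dist X y (act h y') <= eta.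
Hypothesis HL : forall h, dist X x0 (act h x0) <= 2 * e + eta -> In h L.

(* Coset representatives [k] give corrections [h_k^-1 k^-1] moving [x0] boundedly; two
   representatives with equal corrections lie in the same coset of [H]. *)
Lemma index_le_of_orbit_near K theta : is_subgroup G K ->
  (forall k, K k -> near Y e (act k x0)) -> INR (length L) <= theta ->
  ~ index_gt G K H theta.
Proof.
  intros [HK1 [_ HKinv]] Hnear Htheta [l [Hl [Hlen Hcos]]].
  destruct (Hnear _ HK1) as [y0 [Hy0 Hd0]]. rewrite act_one in Hd0 by exact IA.
  assert (Hh : forall i, exists h, (i < length l)%nat -> H h /\
    dist X (act (ginv G (nth i l (gone G))) x0) (act h x0) <= 2 * e + eta).
  { intro i. destruct (lt_dec i (length l)) as [Hi | Hi]; [| exists (gone G); lia].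
    destruct (Hnear _ (HKinv _ (Hl _ (nth_In _ (gone G) Hi)))) as [y [Hy Hdy]].
    destruct (HYcob y y0 Hy Hy0) as [h [Hh Hdh]]. exists h. intros _. split; [exact Hh |].
    pose proof (dist_tri X (act (ginv G (nth i l (gone G))) x0) y (act h x0)).
    pose proof (dist_tri X y (act h y0) (act h x0)) as Hyx0.
    rewrite act_dist, (dist_sym X y0) in Hyx0 by exact IA. lra. }
  destruct (functional_choice _ Hh) as [hf Hhf].
  set (corr := fun i => gmul G (ginv G (hf i)) (ginv G (nth i l (gone G)))).
  destruct (pigeonhole corr L (length l)) as [i [j [Hij Eij]]].
  - intros i Hi. apply HL. unfold corr.
    rewrite <- (act_dist G X act IA (hf i)), act_mul, act_inv_r, dist_sym by exact IA.
    apply Hhf, Hi.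
  - apply INR_lt. lra.
  - apply gmul_ginv_swap in Eij. rewrite ginvK in Eij.
    apply (Hcos j i); [lia | lia | lia |]. rewrite Eij.
    destruct HS as [_ [Hmul Hinv]]. apply Hmul; [| apply Hinv]; apply Hhf; lia.
Qed.

Lemma translate_dichotomy (A : X -> Prop) theta :
  A x0 -> e <= theta -> INR (length L) <= theta ->
  (forall u, Rbar_lt (Finite theta) (diam X (inter X (translate G X act u A) Y)) ->
     forall x, translate G X act u A x -> near Y e x) ->
  (forall u, Rbar_lt (Finite theta) (diam X (inter X (translate G X act u A) Y)) ->
     forall x, translate G X act u A x -> nbhd X Y theta x) /\
  (forall K, is_subgroup G K -> index_gt G K H theta ->
     exists k, K k /\ Rbar_le (diam X (inter X (translate G X act k A) Y)) (Finite theta)).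
Proof.
  intros HA0 He HL_theta Hnear. split.
  - intros u Hlt x Hx. apply near_nbhd, (near_mono X Y e); [exact He | exact (Hnear u Hlt x Hx)].
  - intros K HK Hidx. apply NNPP. intro Hno.
    apply (index_le_of_orbit_near K theta HK); [| exact HL_theta | exact Hidx].
    intros k Hk. apply (Hnear k); [| exists x0; auto].
    apply Rbar_not_le_lt. intro Hle. apply Hno. eauto.
Qed.

End FiniteIndex.

Theorem mainTheorem12 (G : Group) (X : MetricSpace) (act : G -> X -> X)
  (Gam : path X -> Prop) (mu nu eta : R) (g : G) (A : X -> Prop) :
  path_system_group G X act Gam mu nu ->
  0 <= eta ->
  qc_element G X act Gam eta g A ->
  exists theta : R, 1 <= theta /\
    forall (H : G -> Prop) (Y : X -> Prop),
      qc_subgroup G X act Gam eta H Y ->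
      (forall u : G,
         Rbar_lt (Finite theta) (diam X (inter X (translate G X act u A) Y)) ->
         forall x, translate G X act u A x -> nbhd X Y theta x) /\
      (forall K : G -> Prop, is_subgroup G K ->
         (forall h, H h -> K h) ->
         index_gt G K H theta ->
         exists k, K k /\
           Rbar_le (diam X (inter X (translate G X act k A) Y)) (Finite theta)).
Proof.
  intros PSG Heta QE.
  destruct (classic (exists a0, A a0)) as [[a0 HA0] | HnoA].
  2:{ exists 1. split; [lra |]. intros H Y _.
      assert (Hsmall : forall u, Rbar_le (diam X (inter X (translate G X act u A) Y)) (Finite 1))
        by (intro u; apply diam_le_of_empty; [lra | intros x [[a [Ha _]] _]; eauto]).
      split; [intros u Hlt; destruct (Rbar_lt_not_le _ _ Hlt (Hsmall u)) |].
      intros K HK _ _. exists (gone G). split; [apply HK | apply Hsmall]. }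
  pose proof PSG as [_ [IA [PA _]]]. pose proof QE as [Hinf [_ [_ [HAqc _]]]].
  pose proof (qc_element_near_orbit G X act Gam eta g A a0 QE HA0) as HAorb.
  destruct (zpow_displacement_bounded G X act g PA Hinf a0 (2 * (2 * eta + 1) + 1))
    as [M0 [HM0 HM0b]].
  set (D1 := dist X a0 (act g a0)).
  set (c := IZR M0 * D1 + ((2 * eta + 1) + (eta + 1))).
  destruct (PA a0 (2 * c + eta)) as [L2 HL2].
  destruct (PA a0 (2 * (eta + c) + eta)) as [L3 HL3].
  set (th0 := 2 * (2 * eta + 1) + INR (length L2) * D1).
  assert (Hpos : 0 <= c /\ 0 <= th0 /\ 0 <= INR (length L3)).
  { pose proof (dist_nonneg X a0 (act g a0)) as HD1.
    pose proof (Rmult_le_pos _ _ (IZR_le _ _ HM0) HD1).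
    pose proof (Rmult_le_pos _ _ (pos_INR (length L2)) HD1).
    pose proof (pos_INR (length L3)). unfold c, th0, D1 in *. repeat split; lra. }
  exists (eta + c + th0 + INR (length L3) + 1). split; [lra |].
  intros H Y [HS [HYinv [HYqc HYcob]]].
  destruct (translate_dichotomy G X act H Y eta (eta + c) a0 L3 IA HS HYcob HL3 A
    (eta + c + th0 + INR (length L3) + 1) HA0) as [Hfar Hindex]; [lra | lra | |].
  - intros u Hlt. apply (translate_near_of_large_intersection G X act Gam mu nu eta g A Y a0
      PSG Heta HAqc HAorb HYqc M0 HM0 HM0b H L2 HS HYinv HYcob HL2 u).
    eapply Rbar_le_lt_trans; [| exact Hlt]. simpl. fold D1 th0. lra.
  - split; [exact Hfar | intros K HK _; exact (Hindex K HK)].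
Qed.
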